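(* The dominant face $\mathcal{D}$ of $\mathcal{R}_{JD}$ equals the set of all $(R_1,\ldots,R_K,C_1,\ldots,C_L)\in\mathbb{R}^{K+L}$ such that, for all $\mathcal{S}\subseteq[K]$ and $\mathcal{T}\subseteq[L]$, $$I(Y_{\mathcal{T}};\hat Y_{\mathcal{T}}\mid X_1^K)-I(X_{\mathcal{S}};\hat Y_{\mathcal{T}^c}\mid X_{\mathcal{S}^c})\ \le\ C(\mathcal{T})-R(\mathcal{S})\ \le\ I(Y_{\mathcal{T}};\hat Y_{\mathcal{T}}\mid X_{\mathcal{S}}).$$
   Context: Fix integers $K,L\ge 1$ and finite alphabets. Let $X_1,\ldots,X_K,Y_1,\ldots,Y_L,\hat Y_1,\ldots,\hat Y_L$ be random variables with joint pmf $\prod_{k=1}^K p(x_k)\, p(y_1,\ldots,y_L\mid x_1,\ldots,x_K)\prod_{\ell=1}^L p(\hat y_\ell\mid y_\ell)$. Thus the $X_k$ are mutually independent, and each $\hat Y_\ell$ is conditionally independent of all other variables given $Y_\ell$. Notation: $X_{\mathcal{A}}=(X_i:i\in\mathcal{A})$, and similarly for $Y_{\mathcal{B}},\hat Y_{\mathcal{B}}$. $X_1^K=(X_1,\ldots,X_K)$, $Y_1^L=(Y_1,\ldots,Y_L)$, $\hat Y_1^L=(\hat Y_1,\ldots,\hat Y_L)$. Complements are taken in $[K]$ for $X$-indices and in $[L]$ for $Y$/$\hat Y$-indices. $R(\mathcal{S})=\sum_{i\in\mathcal{S}}R_i$ and $C(\mathcal{T})=\sum_{j\in\mathcal{T}}C_j$.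 Empty sums and mutual informations involving an empty collection are $0$. $\mathcal{R}_{JD}$ is the set of $(R_1,\ldots,R_K,C_1,\ldots,C_L)\in\mathbb{R}_{\ge0}^{K+L}$ with $$C(\mathcal{T})-R(\mathcal{S})\ge I(Y_{\mathcal{T}};\hat Y_{\mathcal{T}}\mid X_1^K)-I(X_{\mathcal{S}};\hat Y_{\mathcal{T}^c}\mid X_{\mathcal{S}^c})\quad\text{for all }\mathcal{S}\subseteq[K],\ \mathcal{T}\subseteq[L].$$ The dominant face is $$\mathcal{D}=\{(R,C)\in\mathcal{R}_{JD}: C([L])-R([K])=I(Y_1^L;\hat Y_1^L\mid X_1^K)\}.$$ *)

From HB Require Import structures.
From mathcomp Require Import all_boot all_order all_algebra.
From mathcomp Require Import reals exp.
Set Implicit Arguments. Unset Strict Implicit. Unset Printing Implicit Defensive.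
Import Order.TTheory GRing.Theory Num.Theory.
Local Open Scope ring_scope.

Section Defs.
Variable R : realType.

Definition is_pmf (T : finType) (p : T -> R) : Prop :=
  (forall t, 0 <= p t) /\ \sum_t p t = 1.

(* sample space: (x_1^K, y_1^L, yhat_1^L) *)
Definition omega (AX AY AYh : finType) (K L : nat) : finType :=
  ({ffun 'I_K -> AX} * {ffun 'I_L -> AY} * {ffun 'I_L -> AYh})%type.

Variables (AX AY AYh : finType) (K L : nat).
Notation Om := (omega AX AY AYh K L).

Definition joint (px : 'I_K -> AX -> R)
  (W : {ffun 'I_K -> AX} -> {ffun 'I_L -> AY} -> R)
  (Q : 'I_L -> AY -> AYh -> R) (w : Om) : R :=
  (\prod_k px k (w.1.1 k)) * W w.1.1 w.1.2 * \prod_l Q l (w.1.2 l) (w.2 l).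

(* the collections X_S, Y_T, Yhat_T as random variables (entries outside
   the index set are masked to None) *)
Definition XS (S : {set 'I_K}) (w : Om) : {ffun 'I_K -> option AX} :=
  [ffun k => if k \in S then Some (w.1.1 k) else None].
Definition YT (T : {set 'I_L}) (w : Om) : {ffun 'I_L -> option AY} :=
  [ffun l => if l \in T then Some (w.1.2 l) else None].
Definition YhT (T : {set 'I_L}) (w : Om) : {ffun 'I_L -> option AYh} :=
  [ffun l => if l \in T then Some (w.2 l) else None].
Definition Xall (w : Om) : {ffun 'I_K -> AX} := w.1.1.
End Defs.

Definition pdf (R : realType) (Om : finType) (T : eqType)
  (P : Om -> R) (f : Om -> T) (t : T) : R :=
  \sum_(w | f w == t) P w.

(* conditional mutual information I(A;B|C) in nats, with 0 log 0 = 0 *)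
Definition cmi (R : realType) (Om T1 T2 T3 : finType) (P : Om -> R)
  (A : Om -> T1) (B : Om -> T2) (C : Om -> T3) : R :=
  \sum_(a : T1) \sum_(b : T2) \sum_(c : T3)
    let pabc := pdf P (fun w => (A w, B w, C w)) (a, b, c) in
    if pabc == 0 then 0 else
      pabc * ln (pabc * pdf P C c /
                 (pdf P (fun w => (A w, C w)) (a, c) *
                  pdf P (fun w => (B w, C w)) (b, c))).

Definition sumR (R : realType) (K : nat) (r : 'I_K -> R) (S : {set 'I_K}) : R :=
  \sum_(i in S) r i.

Definition RJD (R : realType) (AX AY AYh : finType) (K L : nat)
  (P : omega AX AY AYh K L -> R) (r : 'I_K -> R) (c : 'I_L -> R) : Prop :=
  (forall k, 0 <= r k) /\ (forall l, 0 <= c l) /\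
  forall (S : {set 'I_K}) (T : {set 'I_L}),
    cmi P (YT T) (YhT T) (@Xall AX AY AYh K L)
      - cmi P (XS S) (YhT (~: T)) (XS (~: S))
    <= sumR c T - sumR r S.

Definition dominant_face (R : realType) (AX AY AYh : finType) (K L : nat)
  (P : omega AX AY AYh K L -> R) (r : 'I_K -> R) (c : 'I_L -> R) : Prop :=
  RJD P r c /\
  sumR c [set: 'I_L] - sumR r [set: 'I_K] =
    cmi P (YT [set: 'I_L]) (YhT [set: 'I_L]) (@Xall AX AY AYh K L).

From HB Require Import structures.
From mathcomp Require Import all_boot all_order all_algebra.
From mathcomp Require Import reals exp.
From mathcomp Require Import ring lra.
Import Order.TTheory GRing.Theory Num.Theory.
Local Open Scope ring_scope.
Set Implicit Arguments. Unset Strict Implicit.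

(* Write I(Y_T; Yh_T | Z) through joint entropies. Since each Yh_l is produced
   from Y_l by its own channel Q_l, H(Y_T, Yh_T, Z) = H(Y_T, Z) + G(T), where
   G(T) = sum_(l in T) H(Yh_l | Y_l) is additive in T; this expresses every
   mutual information of the form I(Y_T; Yh_T | X_S) as
   H(Yh_T, X_S) - G(T) - H(X_S).  On the dominant face the upper bound at
   (S, T) is the total-rate equation minus the lower bound at (S^c, T^c), and
   with these identities the resulting slack is I(Yh_T; Yh_(T^c) | X) >= 0.
   Conversely, the bounds at ({k}, {}), ({}, {l}) and ([K], [L]) give the
   nonnegativity of the rates and the total-rate equation.  Nonnegativity of
   conditional mutual information is Gibbs' inequality, via ln x >= 1 - 1/x. *)

Lemma one_subV_le_ln (R : realType) (x : R) : 0 < x -> 1 - x^-1 <= ln x.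
Proof.
move=> x0; have := @le_ln1Dx R (x^-1 - 1).
rewrite addrCA subrr addr0 lnV ?posrE //; have := invr_gt0 x; lra.
Qed.

Section Entropy.
Variables (R : realType) (Om : finType) (P : Om -> R).
Hypothesis P_ge0 : forall w, 0 <= P w.

Lemma pdf_ge0 (T : eqType) (F : Om -> T) t : 0 <= pdf P F t.
Proof. exact: sumr_ge0. Qed.

Lemma pdf_gt0 (T : eqType) (F : Om -> T) w : P w != 0 -> 0 < pdf P F (F w).
Proof.
move=> Pw; rewrite /pdf (bigD1 w) //= ltr_pwDl ?sumr_ge0 //.
by rewrite lt0r Pw P_ge0.
Qed.

Lemma sum_pdfM (T : finType) (F : Om -> T) (g : T -> R) :
  \sum_t pdf P F t * g t = \sum_w P w * g (F w).
Proof.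
rewrite (partition_big F xpredT) //=; apply: eq_bigr => t _.
by rewrite /pdf mulr_suml; apply: eq_bigr => w /eqP ->.
Qed.

Lemma sum_pdf (T : finType) (F : Om -> T) : \sum_t pdf P F t = \sum_w P w.
Proof. by rewrite (partition_big F xpredT). Qed.

Lemma sum_pdf_pair (T1 T2 : finType) (A : Om -> T1) (C : Om -> T2) c :
  \sum_a pdf P (fun w => (A w, C w)) (a, c) = pdf P C c.
Proof.
rewrite /pdf (partition_big A xpredT (P := fun w => C w == c)) //=.
by apply: eq_bigr => a _; apply: eq_bigl => w; rewrite xpair_eqE andbC.
Qed.

Definition entropy (T : eqType) (F : Om -> T) :=
  - \sum_w P w * ln (pdf P F (F w)).

Lemma eq_entropy (T1 T2 : eqType) (F : Om -> T1) (G : Om -> T2) :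
  (forall w w', (F w' == F w) = (G w' == G w)) -> entropy F = entropy G.
Proof.
move=> eqFG; congr (- _); apply: eq_bigr => w _.
by rewrite /pdf (eq_bigl _ _ (eqFG w)).
Qed.

Section ConditionalMutualInformation.
Variables (T1 T2 T3 : finType) (A : Om -> T1) (B : Om -> T2) (C : Om -> T3).
Let ABC w := (A w, B w, C w).
Let AC w := (A w, C w).
Let BC w := (B w, C w).

Lemma cmiE : cmi P A B C =
  \sum_w P w * ln (pdf P ABC (ABC w) * pdf P C (C w) /
                   (pdf P AC (AC w) * pdf P BC (BC w))).
Proof.
pose g (t : T1 * T2 * T3) := ln (pdf P ABC t * pdf P C t.2 /
  (pdf P AC (t.1.1, t.2) * pdf P BC (t.1.2, t.2))).
rewrite -(sum_pdfM ABC g) /cmi !pair_big /=; apply: eq_bigr => -[[a b] c] _ /=.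
by case: eqP => [->|]; rewrite ?mul0r.
Qed.

Lemma cmi_entropy :
  cmi P A B C = entropy AC + entropy BC - entropy ABC - entropy C.
Proof.
rewrite cmiE /entropy -!sumrN -!big_split /=; apply: eq_bigr => w _.
have [->|Pw] := eqVneq (P w) 0; first by rewrite !mul0r !oppr0 !addr0.
have := pdf_gt0 ABC Pw; have := pdf_gt0 C Pw.
have := pdf_gt0 AC Pw; have := pdf_gt0 BC Pw.
move=> ? ? ? ?; rewrite ln_div ?posrE ?mulr_gt0 // !lnM ?posrE //; ring.
Qed.

End ConditionalMutualInformation.

Lemma gibbs_ineq (T : finType) (F : Om -> T) (q : T -> R) :
    (forall t, 0 <= q t) -> \sum_t q t <= \sum_w P w ->
    (forall w, P w != 0 -> 0 < q (F w)) ->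
  0 <= \sum_w P w * ln (pdf P F (F w) / q (F w)).
Proof.
move=> q_ge0 sum_q_le q_gt0.
pose g t := q t / pdf P F t.
have ln_ge w : P w - P w * g (F w) <= P w * ln (pdf P F (F w) / q (F w)).
  have [->|Pw] := eqVneq (P w) 0; first by rewrite !mul0r subrr.
  rewrite -{1}[P w]mulr1 -mulrBr ler_wpM2l // /g -[q _ / _]invf_div.
  by apply: one_subV_le_ln; rewrite divr_gt0 ?pdf_gt0 ?q_gt0.
apply: le_trans (ler_sum _ (fun w _ => ln_ge w)).
rewrite sumrB subr_ge0 -(sum_pdfM F g); apply: le_trans sum_q_le.
apply: ler_sum => t _; rewrite /g.
have [->|pt] := eqVneq (pdf P F t) 0; first by rewrite mul0r.
by rewrite mulrC divfK.
Qed.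

Definition cond_indep_pdf (T1 T2 T3 : finType)
    (A : Om -> T1) (B : Om -> T2) (C : Om -> T3) (t : T1 * T2 * T3) :=
  pdf P (fun w => (A w, C w)) (t.1.1, t.2) *
  pdf P (fun w => (B w, C w)) (t.1.2, t.2) / pdf P C t.2.

Lemma sum_cond_indep_pdf_le (T1 T2 T3 : finType)
    (A : Om -> T1) (B : Om -> T2) (C : Om -> T3) :
  \sum_t cond_indep_pdf A B C t <= \sum_w P w.
Proof.
pose f := cond_indep_pdf A B C.
have -> : \sum_t f t = \sum_c \sum_a \sum_b f (a, b, c).
  transitivity (\sum_ab \sum_c f (ab, c)); first by rewrite pair_bigA; apply: eq_bigr => -[].
  rewrite exchange_big; apply: eq_bigr => c _.
  by rewrite pair_bigA; apply: eq_bigr => -[].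
rewrite -(sum_pdf C); apply: ler_sum => c _.
rewrite /f /cond_indep_pdf /=; under eq_bigr do rewrite -mulr_suml -mulr_sumr.
rewrite -!mulr_suml !sum_pdf_pair.
have [->|pc] := eqVneq (pdf P C c) 0; first by rewrite !mul0r.
by rewrite mulfK.
Qed.

Lemma cmi_ge0 (T1 T2 T3 : finType) (A : Om -> T1) (B : Om -> T2) (C : Om -> T3) :
  0 <= cmi P A B C.
Proof.
pose ABC w := (A w, B w, C w).
have -> : cmi P A B C =
    \sum_w P w * ln (pdf P ABC (ABC w) / cond_indep_pdf A B C (ABC w)).
  rewrite cmiE; apply: eq_bigr => w _; congr (_ * ln _).
  by rewrite /cond_indep_pdf /= !invfM invrK; ring.
apply: gibbs_ineq => [t|//|w Pw].
- by rewrite !mulr_ge0 ?invr_ge0 ?pdf_ge0.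
- exact: sum_cond_indep_pdf_le.
- by rewrite !(mulr_gt0, invr_gt0) // (pdf_gt0 _ Pw).
Qed.

Section CmiInvariance.
Variables (T1 T2 T3 : finType) (A : Om -> T1) (B : Om -> T2) (C : Om -> T3).

Lemma cmi_constl : (forall w w', A w' == A w) -> cmi P A B C = 0.
Proof.
move=> A_const; rewrite cmi_entropy.
rewrite (@eq_entropy _ _ (fun w => (A w, C w)) C); last by move=> w w'; rewrite xpair_eqE A_const.
rewrite (@eq_entropy _ _ (fun w => (A w, B w, C w)) (fun w => (B w, C w))); last first.
  by move=> w w'; rewrite !xpair_eqE A_const.
ring.
Qed.

Lemma cmi_constr : (forall w w', B w' == B w) -> cmi P A B C = 0.
Proof.
move=> B_const; rewrite cmi_entropy.
rewrite (@eq_entropy _ _ (fun w => (B w, C w)) C); last by move=> w w'; rewrite xpair_eqE B_const.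
rewrite (@eq_entropy _ _ (fun w => (A w, B w, C w)) (fun w => (A w, C w))); last first.
  by move=> w w'; rewrite !xpair_eqE B_const andbT.
ring.
Qed.

Lemma eq_cmi_cond (T3' : finType) (C' : Om -> T3') :
  (forall w w', (C w' == C w) = (C' w' == C' w)) -> cmi P A B C = cmi P A B C'.
Proof.
move=> eqCC'; rewrite !cmi_entropy (eq_entropy eqCC').
by congr (_ + _ - _ - _); apply: eq_entropy => w w'; rewrite !xpair_eqE eqCC'.
Qed.

End CmiInvariance.
End Entropy.

Lemma eq_mask (I : finType) (T : eqType) (U : {set I}) (f g : I -> T) :
  ([ffun i => if i \in U then Some (f i) else None] ==
   [ffun i => if i \in U then Some (g i) else None] :> {ffun I -> option T})
  = [forall i in U, f i == g i].
Proof.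
apply/eqP/forall_inP => [fg i iU | fg]; last first.
  by apply/ffunP => i; rewrite !ffunE; case: ifP => // /fg /eqP ->.
by have := congr1 (fun h : {ffun I -> option T} => h i) fg; rewrite !ffunE iU => -[->].
Qed.

Lemma forall_in_set0 (I : finType) (e : pred I) : [forall i in set0, e i].
Proof. by apply/forall_inP => i; rewrite in_set0. Qed.

Lemma forall_in_setT_split (I : finType) (U : {set I}) (e : pred I) :
  [forall i in [set: I], e i] = [forall i in U, e i] && [forall i in ~: U, e i].
Proof.
apply/forall_inP/andP => [e_all | [/forall_inP eU /forall_inP eUc] i _].
  by split; apply/forall_inP => i _; apply: e_all; rewrite in_setT.
by case: (boolP (i \in U)) => [/eU|iUc]; last by apply: eUc; rewrite in_setC.
Qed.

Lemma eq_ffun_forall (I : finType) (T : eqType) (f g : {ffun I -> T}) :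
  (f == g) = [forall i in [set: I], f i == g i].
Proof.
apply/eqP/forall_inP => [-> i _ | fg]; first exact: eqxx.
by apply/ffunP => i; apply/eqP/fg; rewrite in_setT.
Qed.

Section Model.
Variables (R : realType) (AX AY AYh : finType) (K L : nat).
Variables (px : 'I_K -> AX -> R)
  (W : {ffun 'I_K -> AX} -> {ffun 'I_L -> AY} -> R)
  (Q : 'I_L -> AY -> AYh -> R).
Hypotheses (Hpx : forall k, is_pmf (px k)) (HW : forall x, is_pmf (W x))
  (HQ : forall l y, is_pmf (Q l y)).

Let Om := omega AX AY AYh K L.
Let P := joint px W Q.
Let X := @Xall AX AY AYh K L.

Lemma joint_ge0 w : 0 <= P w.
Proof.
rewrite /P /joint !mulr_ge0 ?(HW _).1 //.
- by apply: prodr_ge0 => k _; apply: (Hpx k).1.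
- by apply: prodr_ge0 => l _; apply: (HQ _ _).1.
Qed.

Lemma eq_XS S (w w' : Om) : (XS S w' == XS S w) = [forall k in S, w'.1.1 k == w.1.1 k].
Proof. exact: eq_mask. Qed.

Lemma eq_YT T (w w' : Om) : (YT T w' == YT T w) = [forall l in T, w'.1.2 l == w.1.2 l].
Proof. exact: eq_mask. Qed.

Lemma eq_YhT T (w w' : Om) : (YhT T w' == YhT T w) = [forall l in T, w'.2 l == w.2 l].
Proof. exact: eq_mask. Qed.

Lemma eq_XS_setT (w w' : Om) : (XS [set: 'I_K] w' == XS [set: 'I_K] w) = (X w' == X w).
Proof. by rewrite eq_XS eq_ffun_forall. Qed.

Lemma sum_channel_fixed (y : {ffun 'I_L -> AY}) (U : {set 'I_L}) (yh0 : {ffun 'I_L -> AYh}) :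
  \sum_(yh : {ffun 'I_L -> AYh} | [forall l in U, yh l == yh0 l]) \prod_l Q l (y l) (yh l)
  = \prod_(l in U) Q l (y l) (yh0 l).
Proof.
pose D l a := (l \in U) ==> (a == yh0 l).
have -> : \sum_(yh : {ffun 'I_L -> AYh} | [forall l in U, yh l == yh0 l]) \prod_l Q l (y l) (yh l)
        = \sum_(yh in family D) \prod_l Q l (y l) (yh l).
  by apply: eq_bigl => yh; apply/forall_inP/familyP => fam l; [apply/implyP/fam|apply/implyP/fam].
rewrite -(bigA_distr_big_dep D (fun l a => Q l (y l) a)) [RHS]big_mkcond; apply: eq_bigr => l _ /=.
rewrite /D; case: (l \in U) => /=; last exact: (HQ l (y l)).2.
by rewrite (big_pred1 (yh0 l)).
Qed.

Lemma sum_joint_masked (e : pred ({ffun 'I_K -> AX} * {ffun 'I_L -> AY}))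
    (U : {set 'I_L}) (yh0 : {ffun 'I_L -> AYh}) :
  \sum_(w : Om | e w.1 && [forall l in U, w.2 l == yh0 l]) P w
  = \sum_(xy | e xy) (\prod_k px k (xy.1 k) * W xy.1 xy.2) *
                     \prod_(l in U) Q l (xy.2 l) (yh0 l).
Proof.
rewrite -(pair_big_dep e (fun _ (yh : {ffun 'I_L -> AYh}) => [forall l in U, yh l == yh0 l])
                       (fun xy yh => P (xy, yh))).
by apply: eq_bigr => -[x y] _; rewrite -sum_channel_fixed mulr_sumr.
Qed.

Lemma pdf_channel (U : {set 'I_L}) (S : {set 'I_K}) (w0 : Om) :
  pdf P (fun w => (YT U w, YhT U w, XS S w)) (YT U w0, YhT U w0, XS S w0)
  = pdf P (fun w => (YT U w, XS S w)) (YT U w0, XS S w0)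
    * \prod_(l in U) Q l (w0.1.2 l) (w0.2 l).
Proof.
pose e (xy : {ffun 'I_K -> AX} * {ffun 'I_L -> AY}) :=
  [forall l in U, xy.2 l == w0.1.2 l] && [forall k in S, xy.1 k == w0.1.1 k].
rewrite /pdf (eq_bigl (fun w : Om => e w.1 && [forall l in U, w.2 l == w0.2 l])); last first.
  by move=> w /=; rewrite !xpair_eqE eq_YT eq_YhT eq_XS /e -!andbA; congr (_ && _); rewrite andbC.
rewrite [in RHS](eq_bigl (fun w : Om => e w.1 && [forall l in set0, w.2 l == w0.2 l])); last first.
  by move=> w /=; rewrite !xpair_eqE eq_YT eq_XS forall_in_set0 andbT.
rewrite !sum_joint_masked mulr_suml; apply: eq_bigr => -[x y] /andP[/forall_inP y_eq _].
by rewrite big_set0 mulr1; congr (_ * _); apply: eq_bigr => l /y_eq /eqP ->.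
Qed.

Definition channel_entropy (U : {set 'I_L}) :=
  - \sum_(w : Om) P w * ln (\prod_(l in U) Q l (w.1.2 l) (w.2 l)).

Lemma prod_channel_gt0 (U : {set 'I_L}) (w : Om) :
  P w != 0 -> 0 < \prod_(l in U) Q l (w.1.2 l) (w.2 l).
Proof.
move=> Pw; rewrite lt0r prodr_ge0 ?andbT; last by move=> l _; apply: (HQ _ _).1.
apply: contraNneq Pw; case: w => -[x y] yh /= prodU0.
by rewrite /P /joint /= (bigID (mem U)) /= prodU0 mul0r mulr0.
Qed.

Lemma entropy_channel (U : {set 'I_L}) (S : {set 'I_K}) :
  entropy P (fun w => (YT U w, YhT U w, XS S w))
  = entropy P (fun w => (YT U w, XS S w)) + channel_entropy U.
Proof.
rewrite /entropy /channel_entropy -opprD -big_split; congr (- _).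
apply: eq_bigr => w _ /=; rewrite pdf_channel -mulrDr.
have [->|Pw] := eqVneq (P w) 0; first by rewrite !mul0r.
by rewrite lnM ?posrE ?(pdf_gt0 joint_ge0) ?prod_channel_gt0.
Qed.

Lemma channel_entropy_split (T : {set 'I_L}) :
  channel_entropy [set: 'I_L] = channel_entropy T + channel_entropy (~: T).
Proof.
rewrite /channel_entropy -opprD -big_split; congr (- _).
apply: eq_bigr => w _ /=; rewrite -mulrDr (big_setID T) setTI setTD.
have [->|Pw] := eqVneq (P w) 0; first by rewrite !mul0r.
by rewrite lnM ?posrE ?prod_channel_gt0.
Qed.

Lemma cmi_channel (U : {set 'I_L}) (S : {set 'I_K}) :
  cmi P (YT U) (YhT U) (XS S)
  = entropy P (fun w => (YhT U w, XS S w)) - channel_entropy U - entropy P (XS S).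
Proof. rewrite (cmi_entropy joint_ge0) entropy_channel; ring. Qed.

Lemma cmi_Xall (T1 T2 : finType) (A : Om -> T1) (B : Om -> T2) :
  cmi P A B X = cmi P A B (XS [set: 'I_K]).
Proof. by apply: (eq_cmi_cond joint_ge0) => w w'; rewrite eq_XS_setT. Qed.

Lemma cmi_face_gap_le (S : {set 'I_K}) (T : {set 'I_L}) :
  cmi P (YT [set: 'I_L]) (YhT [set: 'I_L]) X - cmi P (YT (~: T)) (YhT (~: T)) X
    + cmi P (XS (~: S)) (YhT T) (XS S)
  <= cmi P (YT T) (YhT T) (XS S).
Proof.
(* The slack is I(Yh_T; Yh_(T^c) | X). *)
have := cmi_ge0 joint_ge0 (YhT T) (YhT (~: T)) (XS [set: 'I_K]).
rewrite !cmi_Xall !cmi_channel !(cmi_entropy joint_ge0) (channel_entropy_split T).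
have -> : entropy P (fun w => (XS (~: S) w, XS S w)) = entropy P (XS [set: 'I_K]).
  by apply: eq_entropy => w w'; rewrite xpair_eqE !eq_XS (forall_in_setT_split S) andbC.
have -> : entropy P (fun w => (XS (~: S) w, YhT T w, XS S w))
          = entropy P (fun w => (YhT T w, XS [set: 'I_K] w)).
  apply: eq_entropy => w w'; rewrite !xpair_eqE !eq_XS (forall_in_setT_split S).
  by case: (YhT T w' == _); rewrite /= ?andbT ?andbF // andbC.
have -> : entropy P (fun w => (YhT T w, YhT (~: T) w, XS [set: 'I_K] w))
          = entropy P (fun w => (YhT [set: 'I_L] w, XS [set: 'I_K] w)).
  by apply: eq_entropy => w w'; rewrite !xpair_eqE !eq_YhT (forall_in_setT_split T).
lra.
Qed.

Lemma dominant_face_upper (r : 'I_K -> R) (c : 'I_L -> R) :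
  dominant_face P r c -> forall S T,
  sumR c T - sumR r S <= cmi P (YT T) (YhT T) (XS S).
Proof.
case=> -[_ [_ lower]] face S T.
have := lower (~: S) (~: T); rewrite !setCK.
move: face (cmi_face_gap_le S T); rewrite /sumR (big_setID T) (big_setID S) !setTI !setTD.
rewrite /=; lra.
Qed.

Lemma bounds_dominant_face (r : 'I_K -> R) (c : 'I_L -> R) :
  (forall S T,
     cmi P (YT T) (YhT T) X - cmi P (XS S) (YhT (~: T)) (XS (~: S))
     <= sumR c T - sumR r S <= cmi P (YT T) (YhT T) (XS S)) ->
  dominant_face P r c.
Proof.
move=> bounds; split; first split; [|split|].
- move=> k; have /andP[_] := bounds [set k] set0.
  rewrite /sumR big_set0 big_set1 (cmi_constl joint_ge0); first lra.
  by move=> w w'; rewrite eq_YT forall_in_set0.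
- move=> l; have /andP[+ _] := bounds set0 [set l].
  rewrite /sumR big_set0 big_set1 (cmi_constl joint_ge0 (A := XS set0)); last first.
    by move=> w w'; rewrite eq_XS forall_in_set0.
  have := cmi_ge0 joint_ge0 (YT [set l]) (YhT [set l]) X; lra.
- by move=> S T; case/andP: (bounds S T).
have /andP[] := bounds [set: 'I_K] [set: 'I_L].
rewrite setCT (@cmi_constr _ _ _ joint_ge0 _ _ _ _ (YhT set0)); last first.
  by move=> w w'; rewrite eq_YhT forall_in_set0.
rewrite -cmi_Xall => ? ?; apply/eqP; rewrite eq_le; apply/andP; split; lra.
Qed.
End Model.

Unset Implicit Arguments. Set Strict Implicit.

Theorem lemma3 (R : realType) (AX AY AYh : finType) (K L : nat)
  (HK : (0 < K)%N) (HL : (0 < L)%N)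
  (px : 'I_K -> AX -> R)
  (W : {ffun 'I_K -> AX} -> {ffun 'I_L -> AY} -> R)
  (Q : 'I_L -> AY -> AYh -> R)
  (Hpx : forall k, is_pmf (px k))
  (HW : forall x, is_pmf (W x))
  (HQ : forall l y, is_pmf (Q l y))
  (r : 'I_K -> R) (c : 'I_L -> R) :
  let P := joint px W Q in
  dominant_face P r c <->
  (forall (S : {set 'I_K}) (T : {set 'I_L}),
     cmi P (YT T) (YhT T) (@Xall AX AY AYh K L)
       - cmi P (XS S) (YhT (~: T)) (XS (~: S))
     <= sumR c T - sumR r S
     <= cmi P (YT T) (YhT T) (XS S)).
Proof.
move=> P; split; last exact: bounds_dominant_face.
move=> face S T; apply/andP; split; first by case: face => -[_ [_ lower]] _; exact: lower.
exact: dominant_face_upper.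
Qed.
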